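(* Let $V$ be a finite nonempty set and $f:\{0,1\}^V\to\{0,1\}^V$ be non-expansive. (1) Every subnetwork of $f$ has at most one fixed point if and only if $f$ has no positive-circular subnetwork. (2) Every subnetwork of $f$ has at least one fixed point if and only if $f$ has no negative-circular subnetwork.
   Context: $d$ is the Hamming distance on $\{0,1\}^V$; $f$ is non-expansive if $d(f(x),f(y))\le d(x,y)$ for all $x,y$. For nonempty $I\subseteq V$ and $z\in\{0,1\}^{V\setminus I}$, the subnetwork of $f$ induced by $z$ is $h:\{0,1\}^I\to\{0,1\}^I$ with $h(x|_I)=f(x)|_I$ for all $x$ whose restriction to $V\setminus I$ is $z$ ($f$ is a subnetwork of itself). For a network $g$ on $W$ and $x^{j\alpha}$ the point equal to $x$ except its $j$-component is $\alpha$, the global interaction graph $G(g)$ is the signed digraph on $W$ with a positive (resp. negative) arc from $j$ to $i$ iff $g_i(x^{j1})-g_i(x^{j0})=1$ (resp. $=-1$) for at least one $x$. A cycle is a subgraph with at most one arc between any ordered pair of vertices whose underlying unsigned digraph is a directed cycle; positive (negative) if it has an even (odd) number of negative arcs. $g$ is positive-circular (negative-circular) if $G(g)$ itself is a positive (negative) cycle through all vertices of $W$. *)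

From mathcomp Require Import all_boot.
Set Implicit Arguments. Unset Strict Implicit. Unset Printing Implicit Defensive.

(* Configurations x in {0,1}^W are finite functions W -> bool (true = 1). *)
Definition config (W : finType) := {ffun W -> bool}.
Definition network (W : finType) := config W -> config W.

Definition hamming (W : finType) (x y : config W) : nat :=
  #|[set v | x v != y v]|.

Definition nonexpansive (W : finType) (f : network W) : Prop :=
  forall x y, hamming (f x) (f y) <= hamming x y.

Definition setc (W : finType) (x : config W) (j : W) (b : bool) : config W :=
  [ffun k => if k == j then b else x k].

Definition pos_arc (W : finType) (g : network W) (j i : W) : bool :=
  [exists x : config W, g (setc x j true) i && ~~ g (setc x j false) i].
Definition neg_arc (W : finType) (g : network W) (j i : W) : bool :=
  [exists x : config W, ~~ g (setc x j true) i && g (setc x j false) i].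

(* G(g) itself is a cycle through all vertices of W, with sign given by
   the parity of its number of negative arcs: there is a successor map s
   such that the arcs are exactly j -> s j, there is at most one arc from
   j to s j, every vertex is reachable from every vertex along s (so s is
   a single cyclic permutation of W), and the number of negative arcs has
   parity [negative]. *)
Definition circular (W : finType) (g : network W) (negative : bool) : Prop :=
  exists s : W -> W,
    [/\ forall j i, (pos_arc g j i || neg_arc g j i) = (i == s j),
        forall j, ~~ (pos_arc g j (s j) && neg_arc g j (s j)),
        forall j k, fconnect s j k
      & odd #|[set j | neg_arc g j (s j)]| = negative].

Definition positive_circular (W : finType) (g : network W) := circular g false.
Definition negative_circular (W : finType) (g : network W) := circular g true.

(* Subnetwork induced by z in {0,1}^{V \ I}, as a network on the vertex
   type {v | v \in I}.  [extend xI z] is the point x of {0,1}^V with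
   x|_I = xI and x|_{V \ I} = z. *)
Definition extend (V : finType) (I : {set V})
    (xI : {ffun {v : V | v \in I} -> bool})
    (z : {ffun {v : V | v \notin I} -> bool}) : config V :=
  [ffun v => match @insub _ (fun v => v \in I) _ v with
             | Some i => xI i
             | None => match @insub _ (fun v => v \notin I) _ v with
                       | Some o => z o
                       | None => false
                       end
             end].

Definition subnetwork (V : finType) (f : network V) (I : {set V})
    (z : {ffun {v : V | v \notin I} -> bool})
    : network {v : V | v \in I} :=
  fun xI => [ffun i => f (extend xI z) (val i)].

Definition fixed_points (W : finType) (g : network W) : {set config W} :=
  [set x | g x == x].

From mathcomp Require Import all_boot.
From Stdlib Require Import Classical.
From mathcomp Require Import zify.
Set Implicit Arguments. Unset Strict Implicit. Unset Printing Implicit Defensive.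

(* A circular network with successor s satisfies g x (s j) = x j (+) c j, the
   parity of c being the sign of the cycle: a positive cycle has two fixed points
   (propagate either value around the cycle), a negative one has none.
   Conversely, a subnetwork with two fixed points yields a set J, minimal for
   some coordinate k, carrying two partial fixed points u, v that agree off J and
   differ at k.  Minimality makes u and v antipodal on J; non-expansiveness then
   makes A |-> {j in J | F moves j away from u when u is flipped on A} a monotone,
   cardinality-preserving map on subsets of J whose only fixed sets are set0 and
   J.  So it is induced by a cyclic permutation succ of J, the succ j coordinate
   of F depending on the j coordinate alone, and the subnetwork on J is
   positive-circular.  A fixed-point-free subnetwork is handled by negating f at
   a coordinate k of a minimal fixed-point-free set: the modified network has two
   partial fixed points there, and the extra negation makes the cycle negative. *)

Lemma ex_card_minimal (T : finType) (P : {set T} -> Prop) (A : {set T}) :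
  P A -> exists2 B, P B & forall C : {set T}, #|C| < #|B| -> ~ P C.
Proof.
move: {2}#|A| (leqnn #|A|) => n; elim: n A => [|n IH] A leAn PA.
  by exists A => // C; rewrite ltnNge (leq_trans leAn).
have [[C ltCA PC] | minA] := classic (exists2 C : {set T}, #|C| < #|A| & P C).
  by apply: (IH C) => //; rewrite -ltnS (leq_trans ltCA).
by exists A => // C ltCA PC; apply: minA; exists C.
Qed.

Lemma card_set_in_sum (T : finType) (J : {set T}) (P : pred T) :
  #|[set j in J | P j]| = \sum_(j in J) P j.
Proof.
rewrite -sum1_card big_mkcond [RHS]big_mkcond /=.
by apply: eq_bigr => j _; rewrite inE; case: (j \in J); case: (P j).
Qed.

Lemma odd_card_addb (T : finType) (J : {set T}) (a b : pred T) :
  odd #|[set j in J | a j (+) b j]| =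
  odd #|[set j in J | a j]| (+) odd #|[set j in J | b j]|.
Proof.
rewrite !card_set_in_sum -oddD -big_split /=.
have addbE j : (a j + b j = (a j (+) b j) + (a j && b j) * 2)%N.
  by case: (a j); case: (b j).
by rewrite (eq_bigr _ (fun j _ => addbE j)) big_split /= -big_distrl oddD oddM andbF addbF.
Qed.

Lemma odd_card_changes (T : finType) (J : {set T}) (s : T -> T) (a : pred T) :
  s @: J = J -> ~~ odd #|[set j in J | a j (+) a (s j)]|.
Proof.
move=> sJ; have injs : {in J &, injective s} by apply/imset_injP; rewrite sJ.
rewrite odd_card_addb !card_set_in_sum.
by rewrite -(big_imset (fun j => nat_of_bool (a j)) injs) /= sJ addbb.
Qed.

Lemma setc_id (W : finType) (x : config W) m : setc x m (x m) = x.
Proof. by apply/ffunP => v; rewrite ffunE; case: eqP => // ->. Qed.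

Lemma arc_of_change (W : finType) (g : network W) x m b i :
  g (setc x m b) i != g (setc x m (~~ b)) i -> pos_arc g m i || neg_arc g m i.
Proof.
move=> ne; apply/orP.
have {ne} : g (setc x m true) i != g (setc x m false) i by case: b ne; rewrite // eq_sym.
by case E1: (g _ i); case E2: (g _ i) => // _; [left | right];
  apply/existsP; exists x; rewrite E1 E2.
Qed.

Lemma eq_at_sole_input (W : finType) (g : network W) i j :
  (forall m, m != j -> ~~ (pos_arc g m i || neg_arc g m i)) ->
  forall x y : config W, x j = y j -> g x i = g y i.
Proof.
move=> noarc.
suff eq_n n x y : hamming x y <= n -> x j = y j -> g x i = g y i.
  by move=> x y; apply: eq_n.
elim: n x y => [|n IH] x y dxy xyj; have [m /= xym | same] := pickP [pred m | x m != y m];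
  try by congr (g _ i); apply/ffunP => m; apply/eqP/negbFE/same.
  by move: dxy; rewrite leqn0 cards_eq0 => /eqP/setP/(_ m); rewrite !inE xym.
have mj : m != j by apply: contraNneq xym => ->; rewrite xyj.
have ym : y m = ~~ x m by move: xym; case: (x m); case: (y m).
have -> : g x i = g (setc x m (y m)) i.
  apply/eqP; apply: contraNT (noarc m mj); rewrite ym -{1}(setc_id x m).
  exact: arc_of_change.
apply: IH; last by rewrite ffunE eq_sym (negbTE mj).
rewrite -ltnS (leq_trans _ dxy) // proper_card //; apply/properP; split.
  by apply/subsetP => v; rewrite !inE ffunE; case: (v =P m) => // ->; rewrite eqxx.
by exists m; rewrite !inE ?ffunE ?eqxx.
Qed.

Lemma fconnect_total_inj (W : finType) (s : W -> W) :
  (forall j k, fconnect s j k) -> injective s.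
Proof.
move=> conn.
have onto : s @: [set: W] = [set: W].
  apply/setP => k; rewrite inE; have := iter_findex (conn (s k) k).
  by case: (findex s (s k) k) => [|n] /= <-; rewrite imset_f ?inE.
have injT : {in [set: W] &, injective s} by apply/imset_injP; rewrite onto.
by move=> j k /injT; apply; rewrite inE.
Qed.

Lemma circularP (W : finType) (g : network W) b :
  circular g b -> exists s (c : W -> bool),
    [/\ injective s, forall j k, fconnect s j k,
        forall x j, g x (s j) = x j (+) c j & odd #|[set j | c j]| = b].
Proof.
case=> s [arcs single conn sign]; have injs := fconnect_total_inj conn.
exists s, (fun j => neg_arc g j (s j)); split => // x j.
have only_j (y z : config W) : y j = z j -> g y (s j) = g z (s j).
  apply: eq_at_sole_input => m mj; rewrite arcs; apply: contra mj => /eqP/injs->.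
  exact: eqxx.
have := arcs j (s j); rewrite eqxx; have := single j.
case Hp: (pos_arc g j (s j)); case Hn: (neg_arc g j (s j)) => //= _ _.
- case/existsP: Hp => w /andP [w1 w0].
  rewrite (only_j x (setc w j (x j))) ?ffunE ?eqxx //.
  by case: (x j) => /=; [rewrite w1 | apply/negbTE].
- case/existsP: Hn => w /andP [w1 w0].
  rewrite (only_j x (setc w j (x j))) ?ffunE ?eqxx //.
  by case: (x j) => /=; [apply/negbTE | rewrite w0].
Qed.

Lemma circular_xor (W : finType) (h : network W) (s : W -> W) (e : W -> bool) :
  injective s -> (forall j k, fconnect s j k) ->
  (forall x j, h x (s j) = x j (+) e j) -> circular h (odd #|[set j | e j]|).
Proof.
move=> injs conn hE.
have arcE j j' : (pos_arc h j (s j') = (j' == j) && ~~ e j')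
               * (neg_arc h j (s j') = (j' == j) && e j').
  split; apply/existsP/idP => [[x] | /andP [/eqP <- ej]];
    rewrite ?hE ?ffunE; try (case: (j' == j); case: (e j'); case: (x j') => //);
    by exists [ffun => false]; rewrite !hE !ffunE eqxx; move: ej; case: (e j').
exists s; split => //.
- by move=> j i; rewrite -(f_finv injs i) !arcE (inj_eq injs); case: eqP; case: (e _).
- by move=> j; rewrite !arcE eqxx; case: (e j).
- by apply: congr1; apply: eq_card => j; rewrite !inE arcE eqxx.
Qed.

Lemma sum_traject (W : finType) (s : W -> W) r n (F : W -> nat) :
  \sum_(w <- traject s r n) F w = \sum_(m < n) F (iter m s r).
Proof.
elim: n => [|n IH]; first by rewrite big_nil big_ord0.
by rewrite trajectSr -cats1 big_cat big_seq1 IH big_ord_recr.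
Qed.

Lemma cycle_potential (W : finType) (s : W -> W) (c : W -> bool) (r : W) :
  (forall j k, fconnect s j k) -> ~~ odd #|[set j | c j]| ->
  exists x : config W, forall v, x (s v) = x v (+) c v.
Proof.
move=> conn even_c.
have orbit_sum : \sum_(m < order s r) c (iter m s r) = #|[set j | c j]|.
  rewrite -(sum_traject s r _ (fun w => nat_of_bool (c w))).
  have orbitW : perm_eq (traject s r (order s r)) (enum W).
    apply: uniq_perm; [exact: orbit_uniq | exact: enum_uniq |].
    by move=> w; rewrite mem_enum -fconnect_orbit conn.
  rewrite (perm_big _ orbitW) big_enum /= -sum1_card.
  by rewrite [RHS]big_mkcond; apply: eq_bigr => w _; rewrite inE.
pose x : config W := [ffun v => odd (\sum_(m < findex s r v) c (iter m s r))].
exists x => v; rewrite !ffunE.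
have := findex_max (conn r v); have iter_v := iter_findex (conn r v).
set n := findex s r v in iter_v *.
rewrite leq_eqVlt => /orP [/eqP last_v | lt_v].
- have -> : s v = r.
    by rewrite -iter_v -iterS last_v (iter_order (fconnect_total_inj conn)).
  rewrite findex0 big_ord0 /= -[in c v]iter_v -(negbTE even_c) -orbit_sum -last_v.
  by rewrite big_ord_recr oddD oddb.
- have -> : s v = iter n.+1 s r by rewrite iterS iter_v.
  by rewrite findex_iter // big_ord_recr oddD oddb iter_v.
Qed.

Lemma negative_circular_no_fixed_point (W : finType) (g : network W) :
  circular g true -> #|fixed_points g| = 0.
Proof.
case/circularP=> s [c [injs conn gE odd_c]].
apply/eqP; rewrite cards_eq0; apply/eqP/setP => x; rewrite !inE.
apply/negP => /eqP gx; move: odd_c.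
have -> : [set j | c j] = [set j in [set: W] | x j (+) x (s j)].
  by apply/setP => j; rewrite !inE -{2}gx gE addKb.
have permT : s @: [set: W] = [set: W].
  by apply/eqP; rewrite eqEcard subsetT /= (card_imset _ injs).
by rewrite (negbTE (odd_card_changes x permT)).
Qed.

Lemma positive_circular_two_fixed_points (W : finType) (g : network W) :
  0 < #|W| -> circular g false -> 1 < #|fixed_points g|.
Proof.
case/card_gt0P=> r _ /circularP [s [c [injs conn gE odd_c]]].
have [x xE] := cycle_potential r conn (negbT odd_c).
have fixed (y : config W) : (forall v, y (s v) = y v (+) c v) -> y \in fixed_points g.
  by move=> yE; rewrite inE; apply/eqP/ffunP => v; rewrite -(f_finv injs v) gE yE.
apply/card_gt1P; exists x, [ffun v => ~~ x v]; split.
- exact: fixed.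
- by apply: fixed => v; rewrite !ffunE xE; case: (x v); case: (c v).
- by apply/eqP => /ffunP/(_ r); rewrite ffunE; case: (x r).
Qed.

Definition agree_off (V : finType) (J : {set V}) (u w : config V) : Prop :=
  forall m, m \notin J -> w m = u m.

Definition fixed_on (V : finType) (F : network V) (J : {set V}) (w : config V) : Prop :=
  forall j, j \in J -> F w j = w j.

Definition outside (V : finType) (I : {set V}) (u : config V) :
  {ffun {v : V | v \notin I} -> bool} := [ffun o => u (val o)].

Section Subnetwork.
Variables (V : finType) (I : {set V}).
Implicit Types (xI yI : {ffun {v : V | v \in I} -> bool})
  (z : {ffun {v : V | v \notin I} -> bool}).

Lemma extend_in xI z (i : {v : V | v \in I}) : extend xI z (val i) = xI i.
Proof.
rewrite ffunE; case: insubP => [i' _ /val_inj -> // |].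
by rewrite (valP i).
Qed.

Lemma extend_out xI z (o : {v : V | v \notin I}) : extend xI z (val o) = z o.
Proof.
rewrite ffunE; case: insubP => [i' iI _ | _]; first by move: (valP o); rewrite iI.
case: insubP => [o' _ /val_inj -> // |].
by rewrite (valP o).
Qed.

Lemma agree_off_extend xI (u : config V) : agree_off I u (extend xI (outside I u)).
Proof.
by move=> m mI; rewrite -[m]/(val (Sub m mI : {v | v \notin I})) extend_out ffunE.
Qed.

Lemma agree_off_extend2 xI yI z : agree_off I (extend xI z) (extend yI z).
Proof.
by move=> m mI; rewrite -[m]/(val (Sub m mI : {v | v \notin I})) !extend_out.
Qed.

Lemma extend_restrict z (w : config V) :
  (forall o, w (val o) = z o) -> extend [ffun i : {v | v \in I} => w (val i)] z = w.
Proof.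
move=> wz; apply/ffunP => m; have [mI | mI] := boolP (m \in I).
  by rewrite -[m]/(val (Sub m mI : {v | v \in I})) extend_in ffunE.
by rewrite -[m]/(val (Sub m mI : {v | v \notin I})) extend_out wz.
Qed.

Lemma subnetwork_fixedE (f : network V) z xI :
  (xI \in fixed_points (subnetwork f z)) <-> fixed_on f I (extend xI z).
Proof.
rewrite inE; split => [/eqP fx j jI | fx].
  have := congr1 (fun yI => yI (Sub j jI : {v | v \in I})) fx.
  by rewrite /subnetwork ffunE -[in RHS](extend_in xI z) !SubK.
by apply/eqP/ffunP => i; rewrite /subnetwork ffunE fx ?extend_in ?(valP i).
Qed.

Lemma subnetwork_circular (f : network V) (u : config V) (s : V -> V) (e : V -> bool) :
  s @: I = I -> (forall a b, a \in I -> b \in I -> fconnect s a b) ->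
  (forall w, agree_off I u w -> forall j, j \in I -> f w (s j) = w j (+) e j) ->
  circular (subnetwork f (outside I u)) (odd #|[set j in I | e j]|).
Proof.
move=> sI conn fE.
have injs : {in I &, injective s} by apply/imset_injP; rewrite sI.
have sI_in j : j \in I -> s j \in I by move=> jI; rewrite -sI imset_f.
have [sW val_sW] : exists sW : {v | v \in I} -> {v | v \in I},
    forall j, val (sW j) = s (val j).
  by exists (fun j => insubd j (s (val j))) => j; rewrite insubdK // sI_in ?(valP j).
have iter_sW n j : val (iter n sW j) = iter n s (val j).
  by elim: n => // n IH; rewrite !iterS val_sW IH.
have -> : [set j in I | e j] = val @: [set j : {v | v \in I} | e (val j)].
  apply/setP => v; rewrite inE; apply/andP/imsetP => [[vI ev] | [j]].
    by exists (Sub v vI); rewrite ?inE SubK.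
  by rewrite inE => ej ->; rewrite (valP j).
rewrite card_imset; last exact: val_inj.
apply: (circular_xor (s := sW)) => [a b | j i | xI j].
- move/(congr1 val); rewrite !val_sW => /injs ab; apply/val_inj/ab; exact: valP.
- have := iter_findex (conn _ _ (valP j) (valP i)).
  by rewrite -iter_sW => /val_inj <-; exact: fconnect_iter.
- rewrite /subnetwork ffunE val_sW fE ?extend_in ?(valP j) //.
  exact: agree_off_extend.
Qed.

End Subnetwork.

Definition separating (V : finType) (F : network V) (k : V) (J : {set V}) : Prop :=
  k \in J /\ exists u v, [/\ agree_off J u v, fixed_on F J u, fixed_on F J v & u k != v k].

Section MinimalSeparating.
Variables (V : finType) (F : network V) (k : V) (J : {set V}) (u v : config V).
Hypotheses (neF : nonexpansive F) (kJ : k \in J) (uv : agree_off J u v)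
  (fix_u : fixed_on F J u) (fix_v : fixed_on F J v) (uv_k : u k != v k)
  (minJ : forall J' : {set V}, #|J'| < #|J| -> ~ separating F k J').
Implicit Types (A B : {set V}) (a b c w : config V).

(* Two partial fixed points that agree at some m of J would make J :\ m separating. *)
Lemma antipodal a b : agree_off J u a -> agree_off J u b -> fixed_on F J a ->
  fixed_on F J b -> a k != b k -> forall m, m \in J -> a m != b m.
Proof.
move=> ua ub fix_a fix_b ab_k m mJ; apply/negP => /eqP ab_m.
have mk : m != k by apply: contraNneq ab_k => <-; rewrite ab_m.
apply: (minJ (J' := J :\ m)); first by rewrite (cardsD1 m J) mJ.
split; first by rewrite !inE eq_sym mk.
exists a, b; split => //.
- move=> x; rewrite !inE negb_and negbK => /orP [/eqP -> // | xJ].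
  by rewrite ub // ua.
- by move=> j /setD1P [_ /fix_a].
- by move=> j /setD1P [_ /fix_b].
Qed.

Lemma v_antipodal m : m \in J -> v m = ~~ u m.
Proof.
move=> mJ; have := antipodal (fun _ _ => erefl) uv fix_u fix_v uv_k mJ.
by case: (u m); case: (v m).
Qed.

Definition dist_in (a b : config V) : nat := #|[set j in J | a j != b j]|.

Lemma hamming_agree_off a b : agree_off J u a -> agree_off J u b -> hamming a b = dist_in a b.
Proof.
move=> ua ub; apply: eq_card => j; rewrite !inE.
by have [// | jJ] := boolP (j \in J); rewrite ua // ub // eqxx.
Qed.

Lemma dist_in_F_le w c : agree_off J u w -> agree_off J u c -> fixed_on F J c ->
  dist_in (F w) c <= dist_in w c.
Proof.
move=> uw uc fix_c; rewrite -(hamming_agree_off uw uc) (leq_trans _ (neF w c)) //.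
by apply: subset_leq_card; apply/subsetP => j; rewrite !inE => /andP [jJ]; rewrite fix_c.
Qed.

Lemma dist_in_u_v a : dist_in a u + dist_in a v = #|J|.
Proof.
rewrite /dist_in -(cardsID [set j | a j != u j] J); congr (_ + _);
  apply: eq_card => j; rewrite !inE; case jJ: (j \in J); rewrite ?andbT ?andbF //;
  by rewrite ?v_antipodal //; case: (a j); case: (u j).
Qed.

(* F w is no farther than w from u and from v, and the two distances sum to #|J|. *)
Lemma dist_in_F_u w : agree_off J u w -> dist_in (F w) u = dist_in w u.
Proof.
move=> uw; have := dist_in_F_le uw (fun _ _ => erefl) fix_u.
have := dist_in_F_le uw uv fix_v.
have := dist_in_u_v (F w); have := dist_in_u_v w; lia.
Qed.

Definition flip (A : {set V}) : config V := [ffun m => (m \in A) (+) u m].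

Definition response (A : {set V}) : {set V} := [set j in J | F (flip A) j != u j].

Lemma agree_off_flip A : A \subset J -> agree_off J u (flip A).
Proof. by move=> AJ m mJ; rewrite ffunE (contraNF (subsetP AJ m) mJ). Qed.

Lemma dist_in_flip A : A \subset J -> dist_in (flip A) u = #|A|.
Proof.
move=> AJ; apply: eq_card => j; rewrite !inE ffunE.
by have [/(subsetP AJ) -> | _] := boolP (j \in A); [case: (u j) | rewrite eqxx andbF].
Qed.

Lemma hamming_flip A B : A \subset B -> hamming (flip A) (flip B) = #|B :\: A|.
Proof.
move=> AB; apply: eq_card => j; rewrite !inE !ffunE.
have [jA | jA] := boolP (j \in A); first by rewrite (subsetP AB j jA) eqxx.
by case: (j \in B); case: (u j).
Qed.

Lemma response_sub A : response A \subset J.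
Proof. by apply/subsetP => j /setIdP []. Qed.

Lemma card_response A : A \subset J -> #|response A| = #|A|.
Proof. by move=> AJ; rewrite -(dist_in_flip AJ) -(dist_in_F_u (agree_off_flip AJ)). Qed.

Lemma response_mono A B : A \subset B -> B \subset J -> response A \subset response B.
Proof.
move=> AB BJ; have AJ := subset_trans AB BJ.
have new_le : #|response B :\: response A| <= #|B :\: A|.
  rewrite -(hamming_flip AB) (leq_trans _ (neF _ _)) //; apply: subset_leq_card.
  apply/subsetP => j; rewrite !inE => /andP [FA /andP [jJ FB]].
  by move: FA; rewrite jJ negbK => /eqP ->; rewrite eq_sym.
have : #|response A| <= #|response B :&: response A|.
  have := subset_leq_card (subsetIr (response B) (response A)).
  move: new_le (subset_leq_card AB); rewrite !cardsD (setIidPr AB) !card_response //.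
  lia.
by move=> le; apply/setIidPr/eqP; rewrite eqEcard subsetIr le.
Qed.

(* A flip pattern reproduced by F is a partial fixed point; antipodality forces it trivial. *)
Lemma response_fixed A : A \subset J -> response A = A -> A = set0 \/ A = J.
Proof.
move=> AJ rA.
have fix_A : fixed_on F J (flip A).
  move=> j jJ; have := congr1 (fun S : {set V} => j \in S) rA; rewrite /= inE jJ ffunE.
  by case: (j \in A); case: (u j); case: (F _ j).
have [kA | kA] := boolP (k \in A); [right | left]; apply/setP => m.
- apply/idP/idP => [/(subsetP AJ) // | mJ].
  have flip_k : flip A k != u k by rewrite ffunE kA; case: (u k).
  have := antipodal (agree_off_flip AJ) (fun _ _ => erefl) fix_A fix_u flip_k mJ.
  by rewrite ffunE; case: (m \in A); rewrite ?eqxx.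
- rewrite inE; apply/negP => mA; have mJ := subsetP AJ m mA.
  have flip_k : flip A k != v k by rewrite ffunE (negbTE kA).
  have := antipodal (agree_off_flip AJ) uv fix_A fix_v flip_k mJ.
  by rewrite !ffunE mA v_antipodal //; case: (u m).
Qed.

Definition succ (j : V) : V := odflt j [pick i in response [set j]].

Lemma response1 j : j \in J -> response [set j] = [set succ j].
Proof.
move=> jJ; have /cards1P [i ri] : #|response [set j]| == 1.
  by rewrite card_response ?sub1set // cards1.
rewrite /succ ri; case: pickP => [i' | /(_ i)]; rewrite !inE ?eqxx //.
by move/eqP ->.
Qed.

Lemma succ_in j : j \in J -> succ j \in J.
Proof. by move=> jJ; apply: (subsetP (response_sub [set j])); rewrite response1 ?set11. Qed.

Lemma imset_succ_sub A : A \subset J -> succ @: A \subset response A.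
Proof.
move=> AJ; apply/subsetP => _ /imsetP [a aA ->]; have aJ := subsetP AJ a aA.
have aA' : [set a] \subset A by rewrite sub1set.
by apply: (subsetP (response_mono aA' AJ)); rewrite response1 ?set11.
Qed.

(* A minimal nonempty succ-stable subset of J is reproduced by response, hence is J. *)
Lemma imset_succ : succ @: J = J.
Proof.
pose P A := [/\ A \subset J, A != set0 & succ @: A \subset A].
have PJ : P J.
  split => //; first by apply/set0Pn; exists k.
  by apply/subsetP => _ /imsetP [a aJ ->]; apply: succ_in.
have [A [AJ A0 sA] minA] := ex_card_minimal PJ.
have sAA : succ @: A = A.
  apply/eqP; rewrite eqEcard sA leqNgt; apply/negP => lt; apply: (minA _ lt).
  split; [exact: subset_trans sA AJ | | exact: imsetS].
  by case/set0Pn: A0 => a aA; apply/set0Pn; exists (succ a); apply: imset_f.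
have rA : response A = A.
  apply/eqP; rewrite eq_sym eqEcard card_response // leqnn andbT.
  by rewrite -{1}sAA imset_succ_sub.
by case: (response_fixed AJ rA) => EA; [rewrite EA eqxx in A0 | rewrite -EA].
Qed.

Lemma succ_inj : {in J &, injective succ}.
Proof. by apply/imset_injP; rewrite imset_succ. Qed.

Lemma response_imset A : A \subset J -> response A = succ @: A.
Proof.
move=> AJ; apply/eqP; rewrite eq_sym eqEcard imset_succ_sub //= card_response //.
by rewrite card_in_imset //; apply: sub_in2 succ_inj; apply/subsetP.
Qed.

Lemma succ_xor w : agree_off J u w -> forall j, j \in J ->
  F w (succ j) = w j (+) (u j (+) u (succ j)).
Proof.
move=> uw j jJ; set A := [set m in J | w m != u m].
have AJ : A \subset J by apply/subsetP => m /setIdP [].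
have wA : w = flip A.
  apply/ffunP => m; rewrite ffunE inE; have [mJ | mJ] := boolP (m \in J).
    by case: (w m); case: (u m).
  by rewrite uw.
have := congr1 (fun S : {set V} => succ j \in S) (response_imset AJ).
have -> : (succ j \in succ @: A) = (j \in A).
  apply/imsetP/idP => [[a aA /succ_inj -> //] | jA]; last by exists j.
  exact: (subsetP AJ).
rewrite /= inE -wA succ_in // inE jJ /=.
by case: (w j); case: (u j); case: (u (succ j)); case: (F w (succ j)).
Qed.

(* The succ-orbit of i is succ-stable, hence reproduced by response, hence J. *)
Lemma succ_connected i j : i \in J -> j \in J -> fconnect succ i j.
Proof.
move=> iJ jJ; set O := [set m | fconnect succ i m].
have OJ : O \subset J.
  apply/subsetP => m; rewrite inE => /iter_findex <-.
  by elim: (findex _ _ _) => //= n IH; apply: succ_in.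
have sOO : succ @: O = O.
  apply/eqP; rewrite eqEcard card_in_imset; last first.
    by apply: sub_in2 succ_inj; apply/subsetP.
  rewrite leqnn andbT; apply/subsetP => _ /imsetP [m mO ->].
  by rewrite /O !inE in mO *; exact: connect_trans mO (fconnect1 succ m).
case: (response_fixed OJ (etrans (response_imset OJ) sOO)) => EO.
  by have := in_set0 i; rewrite -EO inE connect0.
by move: jJ; rewrite -EO inE.
Qed.

End MinimalSeparating.

Lemma separating_cycle (V : finType) (F : network V) k (J : {set V}) :
  nonexpansive F -> separating F k J ->
  exists (I : {set V}) (u : config V) (s : V -> V),
    [/\ k \in I, s @: I = I, forall i j, i \in I -> j \in I -> fconnect s i j
      & forall w, agree_off I u w -> forall j, j \in I ->
          F w (s j) = w j (+) (u j (+) u (s j))].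
Proof.
move=> neF /ex_card_minimal [I [kI [u [v [uv fix_u fix_v uv_k]]]] minI].
exists I, u, (succ F I u); split => //.
- exact: (imset_succ neF kI uv fix_u fix_v uv_k minI).
- exact: (succ_connected neF kI uv fix_u fix_v uv_k minI).
- exact: (succ_xor neF kI uv fix_u fix_v uv_k minI).
Qed.

Lemma positive_circular_of_separating (V : finType) (f : network V) k (J : {set V}) :
  nonexpansive f -> separating f k J ->
  exists (I : {set V}) (z : {ffun {v : V | v \notin I} -> bool}),
    I != set0 /\ positive_circular (subnetwork f z).
Proof.
move=> nef /(separating_cycle nef) [I [u [s [kI sI conn fE]]]].
exists I, (outside I u); split; first by apply/set0Pn; exists k.
by have := subnetwork_circular sI conn fE; rewrite (negbTE (odd_card_changes u sI)).
Qed.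

Lemma separating_of_two_fixed_points (V : finType) (f : network V) (I : {set V})
    (z : {ffun {v : V | v \notin I} -> bool}) :
  1 < #|fixed_points (subnetwork f z)| -> exists k, separating f k I.
Proof.
case/card_gt1P => xI [yI [fix_x fix_y xy]].
have /existsP [i xy_i] : [exists i, xI i != yI i].
  rewrite -negb_forall; apply: contra xy => /forallP same.
  by apply/eqP/ffunP => i; apply/eqP/same.
exists (val i); split; first exact: valP.
exists (extend xI z), (extend yI z); split.
- exact: agree_off_extend2.
- exact/subnetwork_fixedE.
- exact/subnetwork_fixedE.
- by rewrite !extend_in.
Qed.

Definition fixed_point_free (V : finType) (f : network V) (I : {set V}) : Prop :=
  exists c : config V, forall w, agree_off I c w -> ~ fixed_on f I w.

Lemma fixed_point_free_subnetwork (V : finType) (f : network V) (I : {set V})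
    (z : {ffun {v : V | v \notin I} -> bool}) :
  #|fixed_points (subnetwork f z)| = 0 -> fixed_point_free f I.
Proof.
move=> no_fix; exists (extend [ffun => false] z) => w cw fix_w.
have wz o : w (val o) = z o by rewrite cw ?(valP o) // extend_out.
have : [ffun i : {v | v \in I} => w (val i)] \in fixed_points (subnetwork f z).
  by apply/subnetwork_fixedE; rewrite extend_restrict.
by move/eqP: no_fix; rewrite cards_eq0 => /eqP ->; rewrite inE.
Qed.

Definition flip_at (V : finType) (f : network V) (k : V) : network V :=
  fun w => setc (f w) k (~~ f w k).

Lemma nonexpansive_flip_at (V : finType) (f : network V) k :
  nonexpansive f -> nonexpansive (flip_at f k).
Proof.
move=> nef x y; rewrite (leq_trans _ (nef x y)) //; apply: eq_leq; apply: eq_card => m.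
by rewrite !inE !ffunE; case: (m =P k) => [-> | //]; case: (f x k); case: (f y k).
Qed.

(* A partial fixed point of f on I :\ k is one of flip_at f k on I, as I is
   fixed point free; its k-th value can be prescribed by minimality of I. *)
Lemma separating_flip_at (V : finType) (f : network V) (I : {set V}) :
  fixed_point_free f I -> (forall J : {set V}, #|J| < #|I| -> ~ fixed_point_free f J) ->
  exists k, separating (flip_at f k) k I.
Proof.
move=> [c no_fix] minI.
have /set0Pn [k kI] : I != set0.
  by apply/negP => /eqP I0; apply: (no_fix c) => // j; rewrite I0 inE.
have fix_b b : exists w : config V,
    [/\ w k = b, agree_off I c w & fixed_on (flip_at f k) I w].
  have [[w [cw fix_w]] | none] := classic (exists w : config V,
      agree_off (I :\ k) (setc c k b) w /\ fixed_on f (I :\ k) w); last first.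
    case: (minI (I :\ k)); first by rewrite (cardsD1 k I) kI.
    by exists (setc c k b) => w cw fix_w; apply: none; exists w.
  have Icw : agree_off I c w.
    move=> m mI; rewrite cw ?ffunE; last by rewrite !inE (negbTE mI) andbF.
    by case: eqP => // mk; rewrite mk kI in mI.
  have fk : f w k != w k.
    apply/eqP => fwk; apply: (no_fix w Icw) => j jI.
    by case: (j =P k) => [-> // | /eqP jk]; apply: fix_w; rewrite !inE jk.
  exists w; split => //; first by rewrite cw ?ffunE ?eqxx // !inE eqxx.
  move=> j jI; rewrite /flip_at ffunE; case: (j =P k) => [-> | /eqP jk].
    by move: fk; case: (f w k); case: (w k).
  by apply: fix_w; rewrite !inE jk.
have [w0 [w0k cw0 fix0]] := fix_b false; have [w1 [w1k cw1 fix1]] := fix_b true.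
exists k; split => //; exists w0, w1; split => //; last by rewrite w0k w1k.
by move=> m mI; rewrite cw1 // cw0.
Qed.

Lemma negative_circular_of_fixed_point_free (V : finType) (f : network V) (J : {set V}) :
  nonexpansive f -> fixed_point_free f J ->
  exists (I : {set V}) (z : {ffun {v : V | v \notin I} -> bool}),
    I != set0 /\ negative_circular (subnetwork f z).
Proof.
move=> nef /ex_card_minimal [J' fpf minJ'].
have [k /(separating_cycle (nonexpansive_flip_at k nef))] := separating_flip_at fpf minJ'.
move=> [I [u [s [kI sI conn gE]]]].
(* Undoing the negation at k changes the sign of the single arc entering k. *)
pose e j := u j (+) u (s j) (+) (s j == k).
have fE w : agree_off I u w -> forall j, j \in I -> f w (s j) = w j (+) e j.
  move=> uw j jI; have := gE w uw j jI; rewrite /flip_at /e ffunE.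
  case: (s j =P k) => [-> | _]; last by rewrite addbF.
  by rewrite addbT addbN => <-; rewrite negbK.
exists I, (outside I u); split; first by apply/set0Pn; exists k.
have [j0 j0I sj0] : exists2 j0, j0 \in I & s j0 = k.
  by move: kI; rewrite -{1}sI => /imsetP [j0 j0I ->]; exists j0.
have hit_k : [set j in I | s j == k] = [set j0].
  have injs : {in I &, injective s} by apply/imset_injP; rewrite sI.
  apply/setP => j; rewrite !inE -sj0; apply/andP/eqP => [[jI /eqP /injs ->] // | ->].
  by rewrite eqxx.
have := subnetwork_circular sI conn fE.
rewrite (odd_card_addb I (fun j => u j (+) u (s j)) (fun j => s j == k)).
by rewrite (negbTE (odd_card_changes u sI)) hit_k cards1.
Qed.

Theorem corollary7 (V : finType) (f : network V) :
  0 < #|V| -> nonexpansive f ->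
  ((forall (I : {set V}) (z : {ffun {v : V | v \notin I} -> bool}),
      I != set0 -> #|fixed_points (subnetwork f z)| <= 1)
   <-> ~ (exists (I : {set V}) (z : {ffun {v : V | v \notin I} -> bool}),
            I != set0 /\ positive_circular (subnetwork f z)))
  /\
  ((forall (I : {set V}) (z : {ffun {v : V | v \notin I} -> bool}),
      I != set0 -> 1 <= #|fixed_points (subnetwork f z)|)
   <-> ~ (exists (I : {set V}) (z : {ffun {v : V | v \notin I} -> bool}),
            I != set0 /\ negative_circular (subnetwork f z))).
Proof.
move=> _ nef; split; split.
- move=> at_most1 [I [z [I0 pos]]]; have /set0Pn [i iI] := I0.
  have sub_gt0 : 0 < #|{: {v : V | v \in I}}| by apply/card_gt0P; exists (Sub i iI).
  by have := positive_circular_two_fixed_points sub_gt0 pos; rewrite ltnNge at_most1.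
- move=> no_pos I z _; rewrite leqNgt; apply/negP.
  by case/separating_of_two_fixed_points => k /(positive_circular_of_separating nef).
- move=> at_least1 [I [z [I0 neg]]].
  by have := at_least1 I z I0; rewrite negative_circular_no_fixed_point.
- move=> no_neg I z _; rewrite lt0n; apply/negP => /eqP /fixed_point_free_subnetwork.
  by move/(negative_circular_of_fixed_point_free nef).
Qed.
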